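(* There is an absolute constant $c$ such that for every instance of $P_n\,|\,\mathrm{conc}, p_j\le p\,|\,*$ with conflict graph $G$ on $n\ge 2$ jobs, there exists a feasible minimal schedule $C$ with $C_{\max}=\max_j C_j\le c\cdot tw(G)\cdot p\log n$ (i.e. $C_{\max}=O(tw(G)\cdot p\log n)$).
   Context: In $P_n\,|\,\mathrm{conc}, p_j\le p\,|\,*$, jobs $\{1,\dots,n\}$ have integer processing times $1\le p_j\le p$ and release time $0$; there is a conflict graph $G=(\{1,\dots,n\},E)$. A schedule $C:\{1,\dots,n\}\to\mathbb{N}$ is feasible if $C_j-p_j\ge 0$ for all $j$ and $[C_i-p_i,C_i)\cap[C_j-p_j,C_j)=\emptyset$ for all $\{i,j\}\in E$. A feasible schedule is minimal if decreasing the completion time of any job by any positive amount makes it infeasible. $tw(G)$ is the treewidth of $G$. *)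

From Stdlib Require Import ClassicalEpsilon.
From mathcomp Require Import all_boot.
Set Implicit Arguments. Unset Strict Implicit. Unset Printing Implicit Defensive.

(* A tree on the node set 'I_m.+1: a symmetric irreflexive, connected relation
   with exactly m (unordered) edges, i.e. 2*m ordered adjacent pairs. *)
Definition is_tree (m : nat) (t : rel 'I_m.+1) : Prop :=
  [/\ symmetric t, irreflexive t,
      (forall a b, connect t a b) &
      #|[set ab : 'I_m.+1 * 'I_m.+1 | t ab.1 ab.2]| = 2 * m].

(* (t, B) is a tree decomposition of the graph (V, E) whose bags have size at
   most k+1 (i.e. width at most k). *)
Definition tree_decomp_width (V : finType) (E : rel V) (k : nat)
    (m : nat) (t : rel 'I_m.+1) (B : 'I_m.+1 -> {set V}) : Prop :=
  [/\ is_tree t,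
      (forall v : V, exists a, v \in B a),
      (forall u v : V, E u v -> exists a, (u \in B a) && (v \in B a)),
      (forall (v : V) (a b : 'I_m.+1), v \in B a -> v \in B b ->
          connect [rel x y | [&& t x y, v \in B x & v \in B y]] a b) &
      (forall a, #|B a| <= k.+1)].

Definition tw_le (V : finType) (E : rel V) (k : nat) : Prop :=
  exists m (t : rel 'I_m.+1) (B : 'I_m.+1 -> {set V}), tree_decomp_width E k t B.

Definition tw_leb (V : finType) (E : rel V) (k : nat) : bool :=
  if excluded_middle_informative (tw_le E k) then true else false.

Lemma tw_leb_exists (V : finType) (E : rel V) : exists k, tw_leb E k.
Proof.
exists #|V|; rewrite /tw_leb; case: excluded_middle_informative => // H.
exfalso; apply: H; exists 0, (fun _ _ => false), (fun _ => setT).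
split.
- split => //.
  + by move=> a b; rewrite !ord1 connect0.
  + by apply/eqP; rewrite cards_eq0; apply/eqP/setP => x; rewrite !inE.
- by move=> v; exists ord0; rewrite inE.
- by move=> u v _; exists ord0; rewrite !inE.
- by move=> v a b _ _; rewrite !ord1 connect0.
- by move=> a; rewrite cardsT.
Qed.

Definition treewidth (V : finType) (E : rel V) : nat := ex_minn (tw_leb_exists E).

Definition feasible (n : nat) (E : rel 'I_n) (pt : 'I_n -> nat) (C : 'I_n -> nat) : Prop :=
  (forall j, pt j <= C j) /\
  (forall i j, E i j -> forall t : nat,
      ~~ ((C i - pt i <= t < C i) && (C j - pt j <= t < C j))).

Definition decrease (n : nat) (C : 'I_n -> nat) (j : 'I_n) (d : nat) : 'I_n -> nat :=
  fun i => if i == j then C j - d else C i.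

Definition minimal_schedule (n : nat) (E : rel 'I_n) (pt : 'I_n -> nat) (C : 'I_n -> nat) : Prop :=
  feasible E pt C /\
  (forall j d, 0 < d <= C j -> ~ feasible E pt (decrease C j d)).

Definition Cmax (n : nat) (C : 'I_n -> nat) : nat := \max_(j < n) C j.

From mathcomp Require Import all_boot.
From Stdlib Require Import ClassicalEpsilon.
From mathcomp Require Import zify.
Set Implicit Arguments. Unset Strict Implicit. Unset Printing Implicit Defensive.

(* A graph of treewidth k is k-degenerate. Peel leaves off a tree decomposition of an
   induced subgraph: either a leaf bag contains a vertex missing from the bag of its
   neighbour, and then every neighbour of that vertex lies in the leaf bag, so it has at
   most k neighbours; or the leaf can be deleted. Hence the conflict graph is
   (tw+1)-colourable, and running colour class c in the time slot [c p, (c+1) p) is a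
   feasible schedule of makespan at most (tw+1) p. Decreasing completion times while
   feasibility allows ends in a minimal schedule that is no later; as log n >= 1 for
   n >= 2, the constant c = 1 works. *)

Definition restr (N : finType) (A : {set N}) (r : rel N) : rel N :=
  [rel x y | [&& r x y, x \in A & y \in A]].

Lemma connect_avoid_pendant (N : finType) (r : rel N) (a b : N) :
  (forall z, r a z -> z = b) -> (forall z, r z a -> z = b) ->
  forall x y, x != a -> y != a -> connect r x y ->
  connect [rel u w | [&& r u w, u != a & w != a]] x y.
Proof.
move=> out_a in_a x y xa ya /connectP [p]; move: {2}(size p) (leqnn (size p)) => s.
elim: s x p xa => [|s IH] x [|z p] //= xa le_ps; try by move=> _ ->.
case/andP=> xz zp y_last; case: (eqVneq z a) => [za|za]; last first.
  by apply: connect_trans (connect1 _) (IH z p za le_ps zp y_last); rewrite /= xz xa za.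
subst z; case: p le_ps zp y_last => [|w p] /= le_ps; first by move=> _ ya'; rewrite ya' eqxx in ya.
case/andP=> /out_a wb wp y_last; move/in_a: xz => xb; subst w x.
exact: IH (ltnW le_ps) wp y_last.
Qed.

Section TreeOn.
Variables (N : finType) (t : rel N).
Hypotheses (t_sym : symmetric t) (t_irr : irreflexive t).

Definition arcs_on (A : {set N}) : {set N * N} :=
  [set xy | [&& xy.1 \in A, xy.2 \in A & t xy.1 xy.2]].

(* Each edge of the subtree on A is counted twice, once as each of its two arcs. *)
Definition tree_on (A : {set N}) : Prop :=
  (forall x y, x \in A -> y \in A -> connect (restr A t) x y) /\
  #|arcs_on A| = 2 * #|A|.-1.

Lemma card_arcs_on A : #|arcs_on A| = \sum_(x in A) #|[set y in A | t x y]|.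
Proof.
under eq_bigr do rewrite -sum1_card.
rewrite pair_big_dep -sum1_card; apply: eq_bigl => -[x y].
by rewrite !inE /= andbA.
Qed.

Lemma tree_on_leaf A : tree_on A -> 1 < #|A| ->
  exists a b, [/\ a \in A, b \in A & [set y in A | t a y] = [set b]].
Proof.
move=> [A_conn A_arcs] A_gt1.
have deg_gt0 x : x \in A -> 0 < #|[set y in A | t x y]|.
  move=> xA; have /card_gt0P [y] : 0 < #|A :\ x| by rewrite (cardsD1 x A) xA in A_gt1.
  rewrite !inE => /andP [yx yA]; case/connectP: (A_conn x y xA yA) => [[|z p]] /=.
    by move=> _ yx'; rewrite yx' eqxx in yx.
  by case/andP=> /and3P [xz _ zA] _ _; apply/card_gt0P; exists z; rewrite inE zA xz.
have [/existsP [a /andP [aA /cards1P [b ab]]]|no_leaf] :=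
  boolP [exists x in A, #|[set y in A | t x y]| == 1].
  by have := set11 b; rewrite -ab inE => /andP [bA _]; exists a, b.
have : \sum_(x in A) 2 <= #|arcs_on A|.
  rewrite card_arcs_on; apply: leq_sum => x xA; rewrite ltn_neqAle deg_gt0 // andbT.
  by apply: contraNneq no_leaf => deg1; apply/existsP; exists x; rewrite xA -deg1.
by rewrite A_arcs sum_nat_const; case: #|A| A_gt1 => [|[|m]] //= _; lia.
Qed.

Section Leaf.
Variables (A : {set N}) (a b : N).
Hypotheses (aA : a \in A) (bA : b \in A) (leaf_ab : [set y in A | t a y] = [set b]).

Lemma leaf_adj z : z \in A -> t a z -> z = b.
Proof. by move=> zA az; apply/set1P; rewrite -leaf_ab inE zA az. Qed.

Lemma leaf_neq : a != b.
Proof. by apply/eqP => ab; have := set11 b; rewrite -leaf_ab inE -ab t_irr andbF. Qed.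

Lemma connect_restr_delete_leaf (r : rel N) : subrel r t ->
  {in A :\ a &, forall x y, connect (restr A r) x y -> connect (restr (A :\ a) r) x y}.
Proof.
move=> rt x y; rewrite !inE => /andP [xa xA] /andP [ya yA] xy.
have restr_eq : [rel u w | [&& restr A r u w, u != a & w != a]] =2 restr (A :\ a) r.
  move=> u w; rewrite /restr /= !inE.
  by case: (r u w) (u \in A) (w \in A) (u != a) (w != a) => [] [] [] [] [].
rewrite -(eq_connect restr_eq); apply: (connect_avoid_pendant (b := b)) => // z /=.
  by case/and3P=> /rt az _ zA; apply: leaf_adj.
by case/and3P=> /rt za zA _; apply: leaf_adj; rewrite // t_sym.
Qed.

Lemma tree_on_delete_leaf : tree_on A -> tree_on (A :\ a).
Proof.
move=> [A_conn A_arcs]; split.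
  move=> x y xA' yA'; apply: connect_restr_delete_leaf => //.
  by apply: A_conn; [case/setD1P: xA' | case/setD1P: yA'].
have ab_t : t a b by have := set11 b; rewrite -leaf_ab inE => /andP [].
have arcs_split : arcs_on A = (a, b) |: ((b, a) |: arcs_on (A :\ a)).
  apply/setP => -[x y]; rewrite !inE /=; apply/idP/idP.
    case/and3P=> xA yA xy; case: (eqVneq x a) => [xa|xa].
      by subst x; rewrite (leaf_adj yA xy) eqxx.
    case: (eqVneq y a) => [ya|ya]; last by rewrite xA yA xy !orbT.
    by subst y; rewrite (leaf_adj xA) ?eqxx ?orbT // t_sym.
  case/or3P=> [/eqP [-> ->]|/eqP [-> ->]|/and3P [/andP [_ xA] /andP [_ yA] ->]].
  - by rewrite aA bA ab_t.
  - by rewrite aA bA t_sym ab_t.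
  - by rewrite xA yA.
have cardA : #|A| = #|A :\ a|.+1 by rewrite (cardsD1 a A) aA.
move: A_arcs; rewrite arcs_split cardA !cardsU1 !inE /= eqxx !andbF /=.
by rewrite xpair_eqE (negbTE leaf_neq) /=; lia.
Qed.

End Leaf.
End TreeOn.

Section DecompositionOn.
Variables (V N : finType) (E : rel V) (t : rel N) (B : N -> {set V}).
Hypotheses (t_sym : symmetric t) (t_irr : irreflexive t).

Definition bag_rel (v : V) : rel N := [rel x y | [&& t x y, v \in B x & v \in B y]].

Definition decomp_on (A : {set N}) (S : {set V}) : Prop :=
  [/\ {in S, forall v, exists2 a, a \in A & v \in B a},
      {in S &, forall u v, E u v -> exists2 a, a \in A & (u \in B a) && (v \in B a)} &
      forall v, v \in S -> {in A &, forall a c, v \in B a -> v \in B c ->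
                                        connect (restr A (bag_rel v)) a c}].

Section Leaf.
Variables (A : {set N}) (S : {set V}) (a b : N).
Hypotheses (aA : a \in A) (bA : b \in A) (leaf_ab : [set y in A | t a y] = [set b]).
Hypothesis decA : decomp_on A S.

Lemma leaf_private_nbhd v : v \in S -> v \in B a -> v \notin B b ->
  {in S, forall u, E v u -> u \in B a}.
Proof.
case: decA => _ dec_edge dec_conn vS va vb u uS vu.
have [c cA /andP [vc uc]] := dec_edge v u vS uS vu.
case: (eqVneq c a) => [<- //|ca].
case/connectP: (dec_conn v vS a c aA cA va vc) => [[|z p]] /=.
  by move=> _ ac; rewrite ac eqxx in ca.
case/andP=> /and3P [/and3P [az _ vz] _ zA] _ _.
by rewrite (leaf_adj leaf_ab zA az) (negbTE vb) in vz.
Qed.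

Lemma decomp_on_delete_leaf : {in S, forall v, v \in B a -> v \in B b} -> decomp_on (A :\ a) S.
Proof.
case: decA => dec_cover dec_edge dec_conn ab_bag.
have bA' : b \in A :\ a by rewrite !inE eq_sym (leaf_neq t_irr leaf_ab) bA.
split.
- move=> v vS; have [c cA vc] := dec_cover v vS.
  case: (eqVneq c a) => [ca|ca]; first by exists b; rewrite // ab_bag // -ca.
  by exists c; rewrite // !inE ca cA.
- move=> u v uS vS uv; have [c cA /andP [uc vc]] := dec_edge u v uS vS uv.
  case: (eqVneq c a) => [ca|ca]; first by exists b; rewrite // !ab_bag // -ca.
  by exists c; rewrite ?uc ?vc // !inE ca cA.
- move=> v vS x y xA' yA' vx vy.
  apply: (connect_restr_delete_leaf t_sym leaf_ab) => //; first by move=> ? ? /and3P [].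
  by apply: dec_conn => //; [case/setD1P: xA' | case/setD1P: yA'].
Qed.

End Leaf.

Lemma decomp_on_nbhd_in_bag A S : tree_on t A -> decomp_on A S -> S != set0 ->
  exists2 v, v \in S & exists a, v \in B a /\ {in S, forall u, E v u -> u \in B a}.
Proof.
have [k] := ubnP #|A|; elim: k A => // k IH A cardA treeA decA /set0Pn [v0 v0S].
have [A_le1|A_gt1] := leqP #|A| 1.
  exists v0 => //; case: decA => /(_ v0 v0S) [a aA va] dec_edge _; exists a; split=> // u uS v0u.
  have [c cA /andP [_ uc]] := dec_edge v0 u v0S uS v0u.
  suff -> : a = c by [].
  by have /card_le1_eqP := A_le1; apply.
have [a [b [aA bA leaf_ab]]] := tree_on_leaf treeA A_gt1.
have [v /and3P [vS va vb]|no_private] := pickP [pred v | [&& v \in S, v \in B a & v \notin B b]].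
  by exists v => //; exists a; split=> //; apply: (leaf_private_nbhd aA leaf_ab decA).
apply: (IH (A :\ a)).
- by move: cardA; rewrite (cardsD1 a A) aA.
- exact: (tree_on_delete_leaf t_sym t_irr aA bA leaf_ab).
- apply: (decomp_on_delete_leaf bA leaf_ab decA) => v vS va.
  by apply/negPn; apply: contraFN (no_private v) => vb; rewrite /= vS va vb.
- by apply/set0Pn; exists v0.
Qed.

End DecompositionOn.

Lemma restr_setT (N : finType) (r : rel N) : restr setT r =2 r.
Proof. by move=> x y; rewrite /restr /= !inE !andbT. Qed.

Lemma is_tree_on_setT m (t : rel 'I_m.+1) : is_tree t -> tree_on t setT.
Proof.
case=> _ _ t_conn t_arcs; split=> [x y _ _|]; first by rewrite (eq_connect (restr_setT t)).
by rewrite cardsT card_ord -t_arcs; apply: eq_card => -[x y]; rewrite !inE.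
Qed.

Definition degenerate (V : finType) (E : rel V) (k : nat) : Prop :=
  forall S : {set V}, S != set0 -> exists2 v, v \in S & #|[set u in S | E v u]| <= k.

Lemma tw_le_degenerate (V : finType) (E : rel V) k : irreflexive E -> tw_le E k -> degenerate E k.
Proof.
move=> E_irr [m [t [B [t_tree cover edge bag_conn bag_size]]]] S S_n0.
have [t_sym t_irr _ _] := t_tree.
have decT : decomp_on E t B setT S.
  split.
  - by move=> v _; have [a va] := cover v; exists a; rewrite ?inE.
  - by move=> u v _ _ /edge [a uva]; exists a; rewrite ?inE.
  - by move=> v _ a c _ _ va vc; rewrite (eq_connect (restr_setT _)); apply: bag_conn.
have [v vS [a [va nbhd]]] := decomp_on_nbhd_in_bag t_sym t_irr (is_tree_on_setT t_tree) decT S_n0.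
exists v => //.
have : [set u in S | E v u] \subset B a :\ v.
  apply/subsetP => u; rewrite !inE => /andP [uS vu]; rewrite nbhd // andbT.
  by apply: contraTneq vu => ->; rewrite E_irr.
move/subset_leq_card/leq_trans; apply.
by have := bag_size a; rewrite (cardsD1 v) va.
Qed.

Lemma degenerate_colouring (V : finType) (E : rel V) k :
  symmetric E -> irreflexive E -> degenerate E k -> forall S : {set V},
  exists col : V -> 'I_k.+1, {in S &, forall u v, E u v -> col u != col v}.
Proof.
move=> E_sym E_irr E_deg S; have [s] := ubnP #|S|; elim: s S => // s IH S cardS.
have [->|S_n0] := eqVneq S set0; first by exists (fun=> ord0) => u v; rewrite inE.
have [v vS deg_v] := E_deg S S_n0.
have /IH [col col_ok] : #|S :\ v| < s by rewrite (cardsD1 v) vS in cardS.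
set nbhd := [set u in S | E v u].
have : #|col @: nbhd| < #|'I_k.+1|.
  by rewrite card_ord ltnS; apply: leq_trans (leq_imset_card _ _) deg_v.
rewrite -(cardsC (col @: nbhd)) -[X in X < _]addn0 ltn_add2l => /card_gt0P [c].
rewrite inE => c_free.
exists (fun u => if u == v then c else col u) => u w uS wS uw.
case: (eqVneq u v) => [uv|uv]; case: (eqVneq w v) => [wv|wv].
- by move: uw; rewrite uv wv E_irr.
- by apply: contra c_free => /eqP ->; apply: imset_f; rewrite inE wS -uv.
- by rewrite eq_sym; apply: contra c_free => /eqP ->; apply: imset_f; rewrite inE uS E_sym -wv.
- by apply: col_ok; rewrite // !inE ?uv ?wv.
Qed.

Lemma tw_le_treewidth (V : finType) (E : rel V) : tw_le E (treewidth E).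
Proof.
by rewrite /treewidth; case: ex_minnP => k; rewrite /tw_leb; case: excluded_middle_informative.
Qed.

Lemma slots_disjoint p a b x y s : a != b -> x <= p -> y <= p ->
  ~~ ((a * p <= s < a * p + x) && (b * p <= s < b * p + y)).
Proof.
have slot_below a' b' z : a' < b' -> z <= p -> a' * p + z <= b' * p.
  by move=> lt_ab z_le; apply: leq_trans (leq_mul lt_ab (leqnn p)); rewrite mulSn addnC leq_add2r.
case: (ltngtP a b) => // [/slot_below ab|/slot_below ba] _ x_le y_le.
  by have := ab x x_le; lia.
by have := ba y y_le; lia.
Qed.

Lemma slot_schedule_feasible n (E : rel 'I_n) (pt : 'I_n -> nat) p (slot : 'I_n -> nat) :
  (forall j, pt j <= p) -> (forall i j, E i j -> slot i != slot j) ->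
  feasible E pt (fun j => slot j * p + pt j).
Proof.
move=> pt_le slot_ok; split=> [j|i j ij s]; first exact: leq_addl.
by rewrite !addnK; apply: slots_disjoint; [apply: slot_ok | apply: pt_le ..].
Qed.

Lemma exists_minimal_below n (E : rel 'I_n) (pt C : 'I_n -> nat) : feasible E pt C ->
  exists2 C', minimal_schedule E pt C' & forall j, C' j <= C j.
Proof.
have [s] := ubnP (\sum_j C j); elim: s C => // s IH C lt_sum C_feas.
have [C_min|] := classic (forall j d, 0 < d <= C j -> ~ feasible E pt (decrease C j d)).
  by exists C.
move=> /not_all_ex_not [j] /not_all_ex_not [d] not_min.
have [/andP [d_gt0 d_le] /NNPP dec_feas] := imply_to_and _ _ not_min.
have dec_le i : decrease C j d i <= C i.
  by rewrite /decrease; case: eqP => [->|_]; rewrite ?leq_subr.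
have sum_dec : \sum_i decrease C j d i + d = \sum_i C i.
  rewrite (bigD1 j) //= [RHS](bigD1 j) //= /decrease eqxx addnAC subnK //.
  by congr (_ + _); apply: eq_bigr => i /negbTE ->.
have [|C' C'_min C'_le] := IH (decrease C j d) _ dec_feas; first by lia.
by exists C' => // i; apply: leq_trans (C'_le i) (dec_le i).
Qed.

Theorem lemma6 :
  exists c : nat,
  forall (n : nat) (E : rel 'I_n) (pt : 'I_n -> nat) (p : nat),
    2 <= n ->
    symmetric E -> irreflexive E ->
    (forall j, 1 <= pt j <= p) ->
    exists C : 'I_n -> nat,
      minimal_schedule E pt C /\
      Cmax C <= c * (treewidth E).+1 * p * trunc_log 2 n.
Proof.
exists 1 => n E pt p n_ge2 E_sym E_irr pt_bound.
have pt_le j : pt j <= p by case/andP: (pt_bound j).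
have E_deg := tw_le_degenerate E_irr (tw_le_treewidth E).
have [col col_ok] := degenerate_colouring E_sym E_irr E_deg setT.
have col_proper i j : E i j -> col i != col j by apply: col_ok; rewrite inE.
have [C C_min C_le] := exists_minimal_below (slot_schedule_feasible pt_le col_proper).
exists C; split=> //; apply/bigmax_leqP => j _.
have makespan : col j * p + pt j <= (treewidth E).+1 * p.
  by rewrite mulSn addnC leq_add ?leq_mul // -ltnS.
have log_gt0 : 0 < trunc_log 2 n by rewrite trunc_log_gt0.
by rewrite mul1n; apply: leq_trans (C_le j) (leq_trans makespan (leq_pmulr _ log_gt0)).
Qed.
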